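(* Let $d_{2,Q}(t,x)=x^4+2t^2x^2-8t^2x+t^4$, $d_{2,P+Q}(t,x)=x^4+2t^2x^2-8t^2x+t^4+t(4x^3-4t^2x+4t^2)$ and $g(t,x)=x^3-t^2x+t^2$. Then there are no integers $t_0>2$ and $x_0$ such that $d_{2,Q}(t_0,x_0)=0$, or $d_{2,P+Q}(t_0,x_0)=0$, or $g(t_0,x_0)=0$.
   Context: These are the $2$-division polynomials (after clearing denominators) of the points $Q=(0,t)$ and $P+Q$ (with $P=(t,t)$) and one quarter of $\psi_2^2$ on $E: y^2=x^3-t^2x+t^2$ over $\mathbb Q(t)$. *)

From Stdlib Require Import ZArith.
Open Scope Z_scope.

Definition d2Q (t x : Z) : Z := x^4 + 2*t^2*x^2 - 8*t^2*x + t^4.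

Definition d2PQ (t x : Z) : Z :=
  x^4 + 2*t^2*x^2 - 8*t^2*x + t^4 + t*(4*x^3 - 4*t^2*x + 4*t^2).

Definition gE (t x : Z) : Z := x^3 - t^2*x + t^2.

(* The roots of d_{2,Q} = (x^2 + t^2)^2 - 8t^2 x have 0 < x <= 2 by AM-GM,
   leaving only (t, x) = (+-2, 2).  With y = x^2 + 2tx - t^2 and c = 2x - t one
   has d_{2,P+Q} = y^2 - 4t^2 c and 4y = c^2 + 6tc + t^2; a root forces c > 0 and
   then 64c >= (6c + t)^2, which fails for t >= 3.  For g, a negative root -u
   gives u^3 = t^2(u + 1), impossible once |t| < u, and a positive root x > 1
   satisfies (x - 1)(t^2 - x^2 - x - 1) = 1. *)

From Stdlib Require Import ZArith Lia.
Open Scope Z_scope.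

Lemma d2Q_root_bounds t x : t <> 0 -> d2Q t x = 0 -> 0 < x <= 2.
Proof.
  unfold d2Q; intros Ht H.
  assert (E : (x^2 + t^2)^2 = 8*t^2*x) by lia.
  assert (Ht2 : 0 < t^2) by nia.
  assert (Hx : 0 < x).
  { destruct (Z_le_gt_dec x 0); [|lia]. nia. }
  assert (4*x^2*t^2 <= 8*t^2*x).
  { rewrite <- E. assert (0 <= (x^2 - t^2)^2) by nia. nia. }
  assert (0 < t^2*x) by nia.
  assert ((t^2*x)*(x - 2) <= 0) by nia.
  nia.
Qed.

Lemma d2Q_at_1 t : d2Q t 1 <> 0.
Proof.
  unfold d2Q; intro H.
  assert (E : t^2*(6 - t^2) = 1) by lia.
  apply Z.eq_mul_1_nonneg in E; [lia | apply Z.pow_even_nonneg; exists 1; reflexivity].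
Qed.

Lemma d2Q_at_2 t : d2Q t 2 = (t^2 - 4)^2.
Proof. unfold d2Q; ring. Qed.

Lemma d2Q_eq0 t x : d2Q t x = 0 -> (t = 0 /\ x = 0) \/ (Z.abs t = 2 /\ x = 2).
Proof.
  intro H.
  destruct (Z.eq_dec t 0) as [-> | Ht].
  - left; split; [reflexivity|]. unfold d2Q in H. nia.
  - right.
    assert (Hx : x = 1 \/ x = 2) by (pose proof (d2Q_root_bounds t x Ht H); lia).
    destruct Hx as [-> | ->]; [now apply d2Q_at_1 in H|].
    rewrite d2Q_at_2 in H.
    assert (t^2 = 4) by nia.
    split; [nia | reflexivity].
Qed.

Lemma quartic_system_unsolvable t y c :
  3 <= t -> y^2 = 4*t^2*c -> 4*y = c^2 + 6*t*c + t^2 -> False.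
Proof.
  intros Ht Ey Ec.
  assert (Hc : 0 < c).
  { destruct (Z_le_gt_dec c 0); [|lia]. nia. }
  assert (Hy : 0 < 4*y) by nia.
  assert (t^2*(6*c + t)^2 <= t^2*(64*c)) by nia.
  assert ((6*c + t)^2 <= 64*c) by nia.
  nia.
Qed.

Lemma d2PQ_no_root t x : 3 <= t -> d2PQ t x <> 0.
Proof.
  unfold d2PQ; intros Ht H.
  apply (quartic_system_unsolvable t (x^2 + 2*t*x - t^2) (2*x - t) Ht); [lia | ring].
Qed.

Lemma gE_neg_root t x : x < 0 -> gE t x <> 0.
Proof.
  unfold gE; intros Hx H.
  set (u := -x); set (a := Z.abs t).
  assert (Hu : 0 < u) by lia.
  assert (Ha : 0 <= a) by lia.
  assert (E : u^3 = a^2*(u + 1)).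
  { replace (a^2) with (t^2) by (unfold a; rewrite !Z.pow_2_r; symmetry; apply Z.abs_square). lia. }
  clearbody u a.
  assert (a < u).
  { destruct (Z_lt_le_dec a u) as [|Hua]; [assumption|].
    assert (u^2 <= a^2) by nia. nia. }
  assert (u^3 >= (a + 1)^2 * u) by nia.
  nia.
Qed.

Lemma gE_nonneg_root t x : 0 <= x -> gE t x = 0 -> t = 0 /\ x = 0.
Proof.
  unfold gE; intros Hx H.
  assert (F : (x - 1)*(t^2 - x^2 - x - 1) = 1) by lia.
  destruct (Z.eq_dec x 0) as [-> | Hx0]; [split; nia | exfalso].
  apply Z.eq_mul_1_nonneg in F as [Hx1 Ht]; [|lia].
  assert (x = 2) by lia; subst x.
  assert (t^2 = 8) by lia.
  assert (2 < Z.abs t < 3) by nia.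
  lia.
Qed.

Lemma gE_eq0 t x : gE t x = 0 -> t = 0 /\ x = 0.
Proof.
  intro H.
  destruct (Z_lt_le_dec x 0) as [Hx | Hx].
  - now apply gE_neg_root in H.
  - exact (gE_nonneg_root t x Hx H).
Qed.

Theorem proposition4p2 :
  ~ (exists t0 x0 : Z, t0 > 2 /\
       (d2Q t0 x0 = 0 \/ d2PQ t0 x0 = 0 \/ gE t0 x0 = 0)).
Proof.
  intros [t [x [Ht [H | [H | H]]]]].
  - apply d2Q_eq0 in H; lia.
  - exact (d2PQ_no_root t x ltac:(lia) H).
  - apply gE_eq0 in H; lia.
Qed.
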